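(* Let $N=2^n$ with $n\ge 2$, let $\mathbf{s}$ be a Zadoff–Chu sequence of length $N$, and let $\pi(x)=a_mx^m+\dots+a_1x+a_0\in\mathbb{Z}_N[x]$ be a permutation polynomial over $\mathbb{Z}_N$ (equivalently, $a_1$ is odd, $a_2+a_4+a_6+\cdots$ is even and $a_3+a_5+a_7+\cdots$ is even). Then (i) $\mathbf{s}\circ\pi$ is a CAZAC sequence, and (ii) $\mathbf{s}\circ\pi^{-1}$ is a CAZAC sequence.
   Context: $\xi_N=e^{-2\pi\sqrt{-1}/N}$, and $\xi_N^{x/2}$ means $e^{-\pi\sqrt{-1}x/N}$. A Zadoff–Chu sequence of length $N$ is $\mathbf{s}$ with $s(k)=\xi_N^{u(k^2+(N\bmod 2)k+2lk)/2}$, $0\le k<N$, where $\gcd(u,N)=1$ and $l$ is an integer. A permutation polynomial over $\mathbb{Z}_N$ is a polynomial inducing a bijection $k\mapsto\pi(k)\bmod N$ of $\mathbb{Z}_N$; $\pi^{-1}$ is the inverse permutation. $(\mathbf{s}\circ\sigma)(k)=s(\sigma(k))$. A sequence is CAZAC if all entries have modulus 1 and its periodic auto-correlation $\theta(d)=\sum_{k=0}^{N-1}y(k)y^*(k+d)$ (indices mod $N$) vanishes for all $0<d<N$. *)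

From HB Require Import structures.
From mathcomp Require Import all_boot all_order all_algebra all_field.
Set Implicit Arguments. Unset Strict Implicit. Unset Printing Implicit Defensive.
Import Order.TTheory GRing.Theory Num.Theory.
Local Open Scope ring_scope.

(* xi_N^(1/2) = e^{-pi i / N}.  N.-root (-1) is the N-th root of -1 with
   minimal nonnegative argument, i.e. e^{pi i / N}; its inverse is e^{-pi i/N}. *)
Definition halfxi (N : nat) : algC := (N.-root (-1))^-1.

(* Zadoff--Chu sequence of length N with root u and shift l:
   s(k) = xi_N^{u(k^2 + (N mod 2) k + 2 l k)/2}, indices k in [0, N). *)
Definition zc (N : nat) (u l : int) (k : nat) : algC :=
  halfxi N ^ (u * ((k%:Z) ^+ 2 + ((N %% 2)%N)%:Z * k%:Z + 2 * l * k%:Z)).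

(* The map k |-> pi(k) mod N induced by an integer polynomial on Z_N
   (coefficients are taken as integers, reduced mod N on evaluation). *)
Definition ppeval (N : nat) (p : {poly int}) (k : nat) : nat :=
  absz ((p.[k%:Z]) %% N%:Z)%Z.

(* p is a permutation polynomial over Z_N: it induces a bijection of
   {0,...,N-1} (the induced map lands in [0,N) for N>0, so injectivity on
   [0,N) is bijectivity). *)
Definition perm_poly (N : nat) (p : {poly int}) : Prop :=
  {in [pred k | (k < N)%N] &, injective (ppeval N p)}.

Definition ppinv (N : nat) (p : {poly int}) (k : nat) : nat :=
  index k (map (ppeval N p) (iota 0 N)).

Definition autocorr (N : nat) (y : nat -> algC) (d : nat) : algC :=
  \sum_(k < N) y k * (y ((k + d) %% N)%N)^*.

Definition CAZAC (N : nat) (y : nat -> algC) : Prop :=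
  (forall k, (k < N)%N -> `|y k| = 1) /\
  (forall d, (0 < d < N)%N -> autocorr N y d = 0).

(* For even N the Zadoff-Chu sequence is s(j) = w^(u((j + l)^2 - l^2)) with
   w = e^(-pi i/N) of order 2N, so with F = pi + l the terms of the
   autocorrelation at lag d are w^(u(F(k)^2 - F(k+d)^2)).  When pi permutes
   Z/2^n, F' is odd everywhere and F(k+x) - F(k) is odd for odd x.  A second
   order Taylor expansion then shows that, for a shift c chosen from the 2-adic
   valuation of d, F(k+c+d)^2 - F(k+c)^2 - F(k+d)^2 + F(k)^2 = N (mod 2N) for
   every k: shifting k by c flips the sign of every term, so the sum vanishes.
   The inverse permutation is induced by an iterated composite of pi, which
   gives the second claim. *)

From HB Require Import structures.
From mathcomp Require Import all_boot all_order all_algebra all_field all_fingroup.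
From mathcomp Require Import zify ring.
Set Implicit Arguments. Unset Strict Implicit. Unset Printing Implicit Defensive.
Import Order.TTheory GRing.Theory Num.Theory.
Local Open Scope ring_scope.

Lemma int_oddE (z : int) : ~~ (2 %| z)%Z -> exists w, z = 2 * w + 1.
Proof. by exists (z %/ 2)%Z; lia. Qed.

Definition taylor_rem2 (R : nzSemiRingType) (p : {poly R}) (h : R) : {poly R} :=
  \sum_(i < size p) p^`N(i.+2) * (h ^+ i)%:P.

Lemma horner_taylor2 (R : comNzRingType) (p : {poly R}) (z h : R) :
  p.[z + h] = p.[z] + h * p^`().[z] + h ^+ 2 * (taylor_rem2 p h).[z].
Proof.
rewrite (@nderiv_taylor_wide _ (size p).+2) ?leqW //; last exact: mulrC.
rewrite !big_ord_recl /= nderivn0 nderivn1 expr0 mulr1 expr1 [h * _]mulrC addrA.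
congr (_ + _); rewrite /taylor_rem2 horner_sum mulr_sumr; apply: eq_bigr => i _.
by rewrite hornerM hornerC /bump /= !add1n [RHS]mulrCA -exprD add2n.
Qed.

Lemma dvdz_horner_sub (p : {poly int}) (a b : int) : (a - b %| p.[a] - p.[b])%Z.
Proof.
apply/dvdzP; exists (p^`().[b] + (a - b) * (taylor_rem2 p (a - b)).[b]).
by rewrite {1}(_ : a = b + (a - b)) ?horner_taylor2; ring.
Qed.

Lemma dvdz_horner_deriv2 (p : {poly int}) (z : int) : (2 %| p^`()^`().[z])%Z.
Proof.
apply/dvdzP; exists p^`N(2).[z].
have -> : p^`()^`() = p^`(2) by rewrite derivnS derivn1.
by rewrite nderivn_def hornerMn -mulr_natr.
Qed.

Lemma dvdz_horner_shift (p : {poly int}) (k x : int) : (x %| p.[k + x] - p.[k])%Z.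
Proof. by have := dvdz_horner_sub p (k + x) k; rewrite addrAC subrr add0r. Qed.

Definition diff2 (h : int -> int) (k x y : int) : int :=
  h (k + x + y) - h (k + x) - h (k + y) + h k.

Lemma diff2C (h : int -> int) (k x y : int) : diff2 h k x y = diff2 h k y x.
Proof. by rewrite /diff2 [k + y + x]addrAC; ring. Qed.

Section SquareSecondDifference.

Variable F : {poly int}.
Hypothesis F'_odd : forall z, ~~ (2 %| F^`().[z])%Z.

Local Notation sqrF := (fun z => F.[z] ^+ 2).

Lemma diff2_sqr_mod (m k x y : int) : (m %| x)%Z -> (2 %| y)%Z ->
    (F.[k + x] * F^`().[k + x] - F.[k] * F^`().[k] = x %[mod 2 * m])%Z ->
  (diff2 sqrF k x y = 2 * x * y %[mod 4 * m * y])%Z.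
Proof.
move=> /dvdzP[x1 ex] /dvdzP[y1 ey] /eqP; rewrite eqz_mod_dvd => /dvdzP[j ej].
apply/eqP; rewrite eqz_mod_dvd; apply/dvdzP.
set A := F.[k] in ej *; set A' := F^`().[k] in ej *.
set B := F.[k + x] in ej *; set B' := F^`().[k + x] in ej *.
set R0 := (taylor_rem2 F y).[k]; set R1 := (taylor_rem2 F y).[k + x].
(* Every term but the first is divisible by 2 m y^2, hence by 4 m y as y is even. *)
have expand : diff2 sqrF k x y = 2 * y * (B * B' - A * A')
    + y ^+ 2 * ((B' - A') * (B' + A')) + 2 * y ^+ 2 * ((B - A) * R1 + A * (R1 - R0))
    + 2 * y ^+ 3 * ((B' - A') * R1 + A' * (R1 - R0)) + y ^+ 4 * ((R1 - R0) * (R1 + R0)).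
  by rewrite /diff2 (horner_taylor2 F (k + x)) (horner_taylor2 F k y); ring.
have [al eal] := dvdzP (dvdz_horner_shift F k x).
have [mu emu] := dvdzP (dvdz_horner_shift F^`() k x).
have [nu enu] := dvdzP (dvdz_horner_shift (taylor_rem2 F y) k x).
have /dvdzP[s es] : (2 %| B' + A')%Z.
  by move: (F'_odd k) (F'_odd (k + x)); rewrite -/A' -/B'; clearbody A' B'; clear -A' B'; lia.
rewrite expand es -/B -/A -/B' -/A' -/R1 -/R0 in eal emu enu *.
have eM : B * B' - A * A' = x + j * (2 * m) by rewrite -ej; ring.
rewrite eM eal emu enu.
exists (j + y1 * mu * x1 * s + y1 * (al * x1 * R1 + A * nu * x1)
  + y1 * y * (mu * x1 * R1 + A' * nu * x1) + y1 * y1 * y * nu * x1 * (R1 + R0)).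
by rewrite ey ex; ring.
Qed.

Lemma diff_mul_deriv_even (k x : int) : (2 %| x)%Z ->
  (F.[k + x] * F^`().[k + x] - F.[k] * F^`().[k] = x %[mod 2 * x])%Z.
Proof.
move=> /dvdzP[x1 ex]; apply/eqP; rewrite eqz_mod_dvd; apply/dvdzP.
have [a ea] := int_oddE (F'_odd k).
have /dvdzP[ph eph] := dvdz_horner_deriv2 F k.
rewrite (horner_taylor2 F k) (horner_taylor2 F^`() k) eph ea ex.
set A := F.[k]; set r1 := _.[k]; set r2 := _.[k].
exists (2 * a * (a + 1) + A * ph + x1 * (A * r2 + 2 * (2 * a + 1) * ph + r1 * (2 * a + 1))
  + x1 * (x1 * 2) * ((2 * a + 1) * r2 + 2 * r1 * ph) + x1 * (x1 * 2) ^+ 2 * r1 * r2).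
ring.
Qed.

Hypothesis F_odd_diff :
  forall z x, ~~ (2 %| x)%Z -> ~~ (2 %| F.[z + x] - F.[z])%Z.

Lemma diff_mul_deriv_odd (k x : int) : ~~ (2 %| x)%Z ->
  (F.[k + x] * F^`().[k + x] - F.[k] * F^`().[k] = x %[mod 2])%Z.
Proof.
move=> x_odd; apply/eqP; rewrite eqz_mod_dvd; apply/dvdzP.
have [w ew] := int_oddE x_odd.
have [t et] := int_oddE (F_odd_diff k x_odd).
have [a ea] := int_oddE (F'_odd k).
have [b eb] := int_oddE (F'_odd (k + x)).
have -> : F.[k + x] = F.[k] + (2 * t + 1) by rewrite -et; ring.
exists (2 * t * b + t + b + F.[k] * (b - a) - w).
by rewrite ea eb ew; ring.
Qed.

Lemma diff2_sqr_even (k x y : int) : (2 %| x)%Z -> (2 %| y)%Z ->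
  (diff2 sqrF k x y = 2 * x * y %[mod 4 * x * y])%Z.
Proof.
move=> x_even y_even; apply: (diff2_sqr_mod (dvdzz x) y_even).
exact: diff_mul_deriv_even.
Qed.

Lemma diff2_sqr_odd (k x y : int) : ~~ (2 %| x)%Z -> (2 %| y)%Z ->
  (diff2 sqrF k x y = 2 * x * y %[mod 4 * y])%Z.
Proof.
move=> x_odd y_even; have := diff2_sqr_mod (dvd1z x) y_even; rewrite !mulr1.
by apply; apply: diff_mul_deriv_odd.
Qed.

Lemma diff2_sqr_shift (n d : nat) : (2 <= n)%N -> (0 < d < 2 ^ n)%N ->
  exists c : nat, forall k : int,
    (diff2 sqrF k c d = (2 ^ n)%N %[mod (2 ^ n.+1)%N])%Z.
Proof.
move=> n_ge2 /andP[d_gt0 d_lt].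
have [b b_odd ed] := pfactor_coprime (isT : prime 2) d_gt0; set t := logn 2 d in ed.
rewrite coprime2n in b_odd.
have t_lt : (t < n)%N.
  by rewrite -(@ltn_exp2l 2) // (leq_ltn_trans _ d_lt) // ed leq_pmull // lt0n; case: (b) b_odd.
(* c = 2^(n-1-t) makes c d = b 2^(n-1), so 2 c d = 2^n (mod 2^(n+1)). *)
pose s := (n - t.+1)%N; exists (2 ^ s)%N => k.
have b_oddz : ~~ (2 %| b%:Z)%Z by rewrite dvdzE dvdn2 negbK.
have pow2_even m : (0 < m)%N -> (2 %| (2 ^ m)%N%:Z)%Z.
  by move=> m_gt0; rewrite dvdzE dvdn_exp.
have eN : (2 ^ n)%N%:Z = 2 * (2 ^ s)%N%:Z * (2 ^ t)%N%:Z.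
  by rewrite {1}(_ : n = (s + t).+1) ?expnS ?expnD ?PoszM ?mulrA //; lia.
have ed' : d%:Z = b%:Z * (2 ^ t)%N%:Z by rewrite ed PoszM.
have reduce_mod M : (2 * (2 ^ n)%N%:Z %| M)%Z ->
    (diff2 sqrF k (2 ^ s)%N d = 2 * (2 ^ s)%N * d %[mod M])%Z ->
  (diff2 sqrF k (2 ^ s)%N d = (2 ^ n)%N %[mod (2 ^ n.+1)%N])%Z.
  move=> dvdM /eqP; rewrite eqz_mod_dvd => /(dvdz_trans dvdM) dvdD.
  apply/eqP; rewrite eqz_mod_dvd [(2 ^ n.+1)%N]expnS PoszM.
  rewrite -(subrK (2 * (2 ^ s)%N%:Z * d%:Z) (diff2 _ _ _ _)) -addrA.
  apply: rpredD dvdD _; rewrite ed' eN.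
  have /dvdzP[w ew] : (2 %| b%:Z - 1)%Z by move: b_oddz; lia.
  apply/dvdzP; exists w; rewrite -[b%:Z](subrK 1) ew; ring.
have [t0 | t_gt0] := posnP t.
  apply: (reduce_mod (4 * (2 ^ s)%N%:Z)); first by rewrite eN t0 mulr1 mulrA.
  rewrite diff2C mulrAC; apply: diff2_sqr_odd; last by apply: pow2_even; lia.
  by rewrite ed' t0 mulr1.
have [s0 | s_gt0] := posnP s.
  apply: (reduce_mod (4 * d%:Z)); first by rewrite ed' eN s0; apply/dvdzP; exists b%:Z; ring.
  rewrite s0; apply: diff2_sqr_odd => //.
  by rewrite ed'; apply: dvdz_mull; apply: pow2_even.
apply: (reduce_mod (4 * (2 ^ s)%N%:Z * d%:Z)).
  by rewrite ed' eN; apply/dvdzP; exists b%:Z; ring.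
by apply: diff2_sqr_even; [apply: pow2_even | rewrite ed'; apply/dvdz_mull/pow2_even].
Qed.

End SquareSecondDifference.

Section PermutationPolynomial.

Variable N : nat.
Hypothesis N_gt0 : (0 < N)%N.

Lemma ppeval_lt p k : (ppeval N p k < N)%N.
Proof. by rewrite /ppeval; lia. Qed.

Lemma ppevalE p k : (ppeval N p k)%:Z = (p.[k%:Z] %% N)%Z.
Proof. by rewrite /ppeval; lia. Qed.

Lemma dvdz_horner_ppeval p k : (N %| p.[k%:Z] - (ppeval N p k)%:Z)%Z.
Proof. by rewrite ppevalE {1}(divz_eq p.[k%:Z] N) addrK dvdz_mull. Qed.

Lemma eq_ppeval_mod p k1 k2 :
  (k1 = k2 %[mod N])%N -> ppeval N p k1 = ppeval N p k2.
Proof.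
move=> eqk; apply/eqP; rewrite -eqz_nat !ppevalE eqz_mod_dvd.
by apply: dvdz_trans (dvdz_horner_sub p k1 k2); rewrite -eqz_mod_dvd !modz_nat eqk.
Qed.

Lemma ppeval_comp p q k : ppeval N (p \Po q) k = ppeval N p (ppeval N q k).
Proof.
apply/eqP; rewrite -eqz_nat 2!ppevalE horner_comp eqz_mod_dvd.
exact: dvdz_trans (dvdz_horner_ppeval q k) (dvdz_horner_sub p _ _).
Qed.

Lemma ppeval_X k : (k < N)%N -> ppeval N 'X k = k.
Proof. by move=> lt_kN; rewrite /ppeval hornerX modz_small ?absz_nat. Qed.

Variable p : {poly int}.
Hypothesis p_perm : perm_poly N p.

Definition ppeval_ord (i : 'I_N) : 'I_N := Ordinal (ppeval_lt p i).

Lemma ppeval_ord_inj : injective ppeval_ord.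
Proof. by move=> i j /(congr1 val) /= /p_perm eq_ij; apply/val_inj/eq_ij; rewrite inE. Qed.

Lemma perm_poly_surj_mod (j : int) : exists k : nat, (N %| p.[k%:Z] - j)%Z.
Proof.
have lt_jN : (`|(j %% N)%Z| < N)%N by lia.
have [g _ gK] := injF_bij ppeval_ord_inj.
exists (g (Ordinal lt_jN)); have /(congr1 val) /= eq_pj := gK (Ordinal lt_jN).
rewrite -eqz_mod_dvd -ppevalE eq_pj; apply/eqP; lia.
Qed.

Lemma perm_poly_odd_diff z x : (2 %| N)%N -> ~~ (2 %| x)%Z ->
  ~~ (2 %| p.[z + x] - p.[z])%Z.
Proof.
move=> two_dvdN x_odd; apply/negP => even_diff.
have [k dvd_k] := perm_poly_surj_mod (p.[z] + 1).
have odd_diff_k := dvdz_trans (two_dvdN : (2 %| N%:Z)%Z) dvd_k.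
have [kz_even | kz_odd] := boolP (2 %| k%:Z - z)%Z.
  have := dvdz_trans kz_even (dvdz_horner_sub p k z).
  by move: odd_diff_k; lia.
have kzx_even : (2 %| k%:Z - (z + x))%Z by move: kz_odd x_odd; lia.
have := dvdz_trans kzx_even (dvdz_horner_sub p k (z + x)).
by move: odd_diff_k even_diff; lia.
Qed.

Lemma perm_poly_odd_deriv z : (4 %| N)%N -> ~~ (2 %| p^`().[z])%Z.
Proof.
move=> four_dvdN; have two_dvdN : (2 %| N)%N := dvdn_trans (isT : (2 %| 4)%N) four_dvdN.
apply/negP => /dvdzP[ph eph].
have [k dvd_k] := perm_poly_surj_mod (p.[z] + 2).
have diff_k := dvdz_trans (four_dvdN : (4 %| N%:Z)%Z) dvd_k.
have [/dvdzP[m em] | kz_odd] := boolP (2 %| k%:Z - z)%Z.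
  have : (4 %| p.[k%:Z] - p.[z])%Z.
    have -> : p.[k%:Z] = p.[z + (k%:Z - z)] by rewrite addrC subrK.
    rewrite horner_taylor2 eph em.
    by apply/dvdzP; exists (m * ph + m ^+ 2 * (taylor_rem2 p (m * 2)).[z]); ring.
  by move: diff_k; lia.
have := perm_poly_odd_diff z two_dvdN kz_odd; rewrite (addrC z) subrK.
by move: diff_k; lia.
Qed.

Lemma ppinv_ppeval i : (i < N)%N -> ppinv N p (ppeval N p i) = i.
Proof.
move=> lt_iN; rewrite /ppinv.
have -> : ppeval N p i = nth 0%N (map (ppeval N p) (iota 0 N)) i.
  by rewrite (nth_map 0%N) ?size_iota // nth_iota.
rewrite index_uniq ?size_map ?size_iota // map_inj_in_uniq ?iota_uniq //.
by move=> a b; rewrite !mem_iota !add0n => /andP[_ lt_aN] /andP[_ lt_bN]; apply: p_perm.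
Qed.

(* The permutation s induced by p has s^-1 = s^(#[s] - 1), which is induced by
   the (#[s] - 1)-fold composite of p. *)
Lemma perm_poly_inv :
  exists q, perm_poly N q /\ forall k, (k < N)%N -> ppinv N p k = ppeval N q k.
Proof.
pose s := perm ppeval_ord_inj; pose iter_comp j := iter j (fun r => p \Po r) 'X.
have iter_compE j k (lt_kN : (k < N)%N) :
    ppeval N (iter_comp j) k = val ((s ^+ j)%g (Ordinal lt_kN)).
  elim: j => [|j IHj]; first by rewrite /= perm1 ppeval_X.
  by rewrite /= ppeval_comp IHj !permX /= permE.
exists (iter_comp #[s]%g.-1); split.
  move=> k1 k2; rewrite !inE => lt_k1N lt_k2N.
  by rewrite (iter_compE _ _ lt_k1N) (iter_compE _ _ lt_k2N) => /val_inj /perm_inj [].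
move=> k lt_kN; rewrite (iter_compE _ _ lt_kN) -invg_expg.
have /(congr1 val) /= ppeval_sV := permKV s (Ordinal lt_kN); rewrite permE /= in ppeval_sV.
by rewrite -{1}ppeval_sV ppinv_ppeval.
Qed.

End PermutationPolynomial.

Section HalfRootOfUnity.

Variable N : nat.
Hypothesis N_gt0 : (0 < N)%N.

Local Notation om := (halfxi N).

Lemma halfxi_expN : om ^+ N = -1.
Proof. by rewrite /halfxi exprVn rootCK // invrN1. Qed.

Lemma halfxi_neq0 : om != 0.
Proof.
apply/eqP => om0; have := halfxi_expN; rewrite om0 expr0n gtn_eqF //.
by move/eqP; rewrite eq_sym oppr_eq0 oner_eq0.
Qed.

Lemma conjC_halfxi_expz (a : int) : (om ^ a)^* = om ^ (- a).
Proof.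
have om_unit : om \is a GRing.unit by rewrite unitfE halfxi_neq0.
rewrite (rmorphXz _ _ om_unit) -exprz_inv; congr (_ ^ _).
apply: (mulfI halfxi_neq0); rewrite mulfV ?halfxi_neq0 // -normCK.
by rewrite /halfxi normfV norm_rootC normrN1 rootC1 // invr1 expr1n.
Qed.

Lemma normr_halfxi_expz (a : int) : `|om ^ a| = 1.
Proof.
apply/eqP; rewrite -(@pexpr_eq1 _ _ 2) // normCK conjC_halfxi_expz.
by rewrite -expfzDr ?halfxi_neq0 // subrr.
Qed.

Lemma halfxi_expz_mod (a b : int) : (a = b %[mod 2 * N%:Z])%Z -> om ^ a = om ^ b.
Proof.
move/eqP; rewrite eqz_mod_dvd => /dvdzP[q eq_ab].
have om_2N : om ^ (2 * N%:Z) = 1.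
  by rewrite -PoszM -exprnP mulnC exprM halfxi_expN sqrrN expr1n.
by rewrite -(subrK b a) eq_ab expfzDr ?halfxi_neq0 // [q * _]mulrC -exprz_exp om_2N exp1rz mul1r.
Qed.

Lemma halfxi_expz_modN (a b : int) :
  (a = b + N%:Z %[mod 2 * N%:Z])%Z -> om ^ a = - om ^ b.
Proof.
move/halfxi_expz_mod ->; rewrite expfzDr ?halfxi_neq0 // -exprnP halfxi_expN.
by rewrite mulrN1.
Qed.

End HalfRootOfUnity.

Lemma zc_ppeval N u l p k : (0 < N)%N -> (2 %| N)%N ->
  zc N u l (ppeval N p k) = halfxi N ^ (u * ((p.[k%:Z] + l) ^+ 2 - l ^+ 2)).
Proof.
move=> N_gt0 two_dvdN; rewrite /zc (eqP two_dvdN) mul0r addr0.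
apply: (halfxi_expz_mod N_gt0); apply/eqP; rewrite eqz_mod_dvd; apply/dvdzP.
have /dvdzP[q eq] := dvdz_horner_ppeval N_gt0 p k.
have -> : (ppeval N p k)%:Z = p.[k%:Z] - q * N by rewrite -eq; ring.
have /dvdnP[M ->] := two_dvdN.
by exists (u * (q ^+ 2 * M - (p.[k%:Z] + l) * q)); rewrite PoszM; ring.
Qed.

Lemma sum_antiperiodic (R : numDomainType) (N c : nat) (T : nat -> R) :
    (0 < N)%N -> (forall k, T (k %% N)%N = T k) -> (forall k, T (k + c)%N = - T k) ->
  \sum_(k < N) T k = 0.
Proof.
move=> N_gt0 T_periodic T_anti.
pose shift (i : 'I_N) : 'I_N := Ordinal (ltn_pmod (i + c) N_gt0).
have shift_inj : injective shift.
  move=> i j /(congr1 val) /= /eqP; rewrite eqn_modDr !modn_small // => /eqP.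
  exact: val_inj.
have sumN : \sum_(k < N) T k = - \sum_(k < N) T k.
  rewrite [LHS](reindex_inj shift_inj) -sumrN; apply: eq_bigr => i _.
  by rewrite /= T_periodic T_anti.
have : (\sum_(k < N) T k) *+ 2 = 0 by rewrite mulr2n {1}sumN addNr.
by move/eqP; rewrite mulrn_eq0 => /eqP.
Qed.

Lemma odd_mulz_mod (u a m : int) : ~~ (2 %| u)%Z ->
  (a = m %[mod 2 * m])%Z -> (u * a = m %[mod 2 * m])%Z.
Proof.
move=> u_odd /eqP; rewrite eqz_mod_dvd => /dvdzP[q eq_a]; apply/eqP; rewrite eqz_mod_dvd.
have [w ->] := int_oddE u_odd; rewrite -(subrK m a) eq_a.
by apply/dvdzP; exists (w + q * (2 * w + 1)); ring.
Qed.

Lemma CAZAC_zc_ppeval (n : nat) (u l : int) (p : {poly int}) :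
    (2 <= n)%N -> ~~ (2 %| u)%Z -> perm_poly (2 ^ n) p ->
  CAZAC (2 ^ n) (fun k => zc (2 ^ n) u l (ppeval (2 ^ n) p k)).
Proof.
move=> n_ge2 u_odd p_perm; set N := (2 ^ n)%N.
have N_gt0 : (0 < N)%N by rewrite expn_gt0.
have four_dvdN : (4 %| N)%N by rewrite (dvdn_exp2l 2 n_ge2).
have two_dvdN : (2 %| N)%N := dvdn_trans (isT : (2 %| 4)%N) four_dvdN.
pose F := p + l%:P.
have FE z : F.[z] = p.[z] + l by rewrite hornerD hornerC.
have F'_odd z : ~~ (2 %| F^`().[z])%Z.
  by rewrite derivD derivC addr0; apply: (perm_poly_odd_deriv N_gt0 p_perm _ four_dvdN).
have F_odd_diff z x : ~~ (2 %| x)%Z -> ~~ (2 %| F.[z + x] - F.[z])%Z.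
  by rewrite !FE opprD addrACA subrr addr0; apply: (perm_poly_odd_diff N_gt0 p_perm _ two_dvdN).
set y := fun k => _.
have yE k : y k = halfxi N ^ (u * (F.[k%:Z] ^+ 2 - l ^+ 2)) by rewrite /y zc_ppeval // FE.
have y_periodic k : y (k %% N)%N = y k by rewrite /y (eq_ppeval_mod N_gt0 p (modn_mod k N)).
split => [k _ | d d_range]; first by rewrite yE normr_halfxi_expz.
have [c Dc] := diff2_sqr_shift F'_odd F_odd_diff n_ge2 d_range.
pose T k := y k * (y (k + d)%N)^*.
have TE k : T k = halfxi N ^ (u * (F.[k%:Z] ^+ 2 - F.[(k + d)%N%:Z] ^+ 2)).
  rewrite /T !yE conjC_halfxi_expz // -expfzDr ?halfxi_neq0 //; congr (_ ^ _); ring.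
have -> : autocorr N y d = \sum_(k < N) T k by apply: eq_bigr => k _; rewrite y_periodic.
apply: (sum_antiperiodic (c := c) N_gt0) => k.
  by rewrite /T y_periodic -(y_periodic (k %% N + d)%N) modnDml y_periodic.
have Tc : T (k + c)%N = T k * halfxi N ^ (- (u * diff2 (fun z => F.[z] ^+ 2) k c d)).
  have shiftE : u * (F.[(k + c)%N%:Z] ^+ 2 - F.[(k + c + d)%N%:Z] ^+ 2)
      = u * (F.[k%:Z] ^+ 2 - F.[(k + d)%N%:Z] ^+ 2) - u * diff2 (fun z => F.[z] ^+ 2) k c d.
    by rewrite /diff2 !PoszD; ring.
  by rewrite !TE shiftE expfzDr ?halfxi_neq0.
have flip : halfxi N ^ (- (u * diff2 (fun z => F.[z] ^+ 2) k c d)) = -1.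
  rewrite (halfxi_expz_modN N_gt0 (b := 0)) ?expr0z // add0r -mulNr.
  apply: odd_mulz_mod; first by move: u_odd; lia.
  by have := Dc k; rewrite expnS PoszM.
by rewrite Tc flip mulrN1.
Qed.

Lemma eq_CAZAC N (y1 y2 : nat -> algC) :
  (forall k, (k < N)%N -> y1 k = y2 k) -> CAZAC N y1 -> CAZAC N y2.
Proof.
move=> eq_y [y1_unit y1_corr]; split=> [k lt_kN | d d_range].
  by rewrite -eq_y ?y1_unit.
rewrite -(y1_corr d d_range) /autocorr; apply: eq_bigr => k _.
have N_gt0 : (0 < N)%N by case/andP: d_range => _; apply: leq_trans.
by rewrite !eq_y ?ltn_pmod.
Qed.

Lemma CAZAC_zc_ppinv (n : nat) (u l : int) (p : {poly int}) :
    (2 <= n)%N -> ~~ (2 %| u)%Z -> perm_poly (2 ^ n) p ->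
  CAZAC (2 ^ n) (fun k => zc (2 ^ n) u l (ppinv (2 ^ n) p k)).
Proof.
move=> n_ge2 u_odd p_perm.
have [q [q_perm ppinvE]] := perm_poly_inv (expn_gt0 2 n) p_perm.
apply: eq_CAZAC (CAZAC_zc_ppeval l n_ge2 u_odd q_perm) => k lt_kN.
by rewrite ppinvE.
Qed.

Lemma coprimez_pow2_odd (n : nat) (u : int) :
  (0 < n)%N -> coprimez u (2 ^ n)%N -> ~~ (2 %| u)%Z.
Proof.
move=> n_gt0 /(coprimez_dvdr (dvdn_exp n_gt0 (dvdnn 2))).
by rewrite coprimezE coprimen2 dvdzE dvdn2 negbK.
Qed.

Theorem theorem2 (n : nat) (u l : int) (p : {poly int}) :
  (2 <= n)%N ->
  coprimez u (2 ^ n)%N%:Z ->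
  perm_poly (2 ^ n) p ->
  CAZAC (2 ^ n) (fun k => zc (2 ^ n) u l (ppeval (2 ^ n) p k)) /\
  CAZAC (2 ^ n) (fun k => zc (2 ^ n) u l (ppinv (2 ^ n) p k)).
Proof.
move=> n_ge2 /(coprimez_pow2_odd (ltnW n_ge2)) u_odd p_perm.
by split; [apply: CAZAC_zc_ppeval | apply: CAZAC_zc_ppinv].
Qed.
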